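(* Let $N\ge 2$. For every $\mathbf w\in W_N$, $$\|\mathbf w\|^2\le\binom{2N}{N}-2,$$ with equality if and only if $\mathbf w(x)=(x+\zeta)^N$ for some $N$-th root of unity $\zeta$.
   Context: Let $N\ge 2$ be an integer and $\mathbb T=\{z\in\mathbb C:|z|=1\}$. For $\mathbf a=(a_1,\dots,a_{N-1})\in\mathbb R^{N-1}$ define $\mathbf c=(c_1,\dots,c_{N-1})\in\mathbb C^{N-1}$ by $c_j=\frac{\sqrt2}{2}(a_j+i\,a_{N-j})$ for $1\le j<N/2$, $c_{N/2}=a_{N/2}$ (only when $N$ is even), and $c_j=\frac{\sqrt2}{2}(a_{N-j}-i\,a_j)$ for $N/2<j\le N-1$ (so $c_{N-j}=\overline{c_j}$ and $\|\mathbf c\|=\|\mathbf a\|$). Associate to $\mathbf a$ the monic polynomial $\mathbf a(x)=x^N+\sum_{n=1}^{N-1}c_nx^{N-n}+1$. Define $W_N=\{\mathbf a\in\mathbb R^{N-1}:\text{all roots of }\mathbf a(x)\text{ lie in }\mathbb T\}$. $\|\cdot\|$ is the Euclidean norm on $\mathbb R^{N-1}$. *)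

From HB Require Import structures.
From mathcomp Require Import all_boot all_order all_algebra.
From mathcomp Require Import reals.
From mathcomp Require Import complex.
Set Implicit Arguments. Unset Strict Implicit. Unset Printing Implicit Defensive.
Import Order.TTheory GRing.Theory Num.Theory.
Local Open Scope ring_scope.

Section Defs.
Variable R : realType.

(* a_j for 1 <= j <= n, from a : 'rV_n (index j is stored at ordinal j-1); 0 otherwise *)
Definition acoord (n : nat) (a : 'rV[R]_n) (j : nat) : R :=
  if j is k.+1 then oapp (fun i : 'I_n => a 0 i) 0 (insub k) else 0.

Definition ccoef (N : nat) (a : 'rV[R]_N.-1) (j : nat) : R[i] :=
  let s := Num.sqrt 2 / 2 in
  if (j.*2 < N)%N then
    ((s * acoord a j) +i* (s * acoord a (N - j)))%C
  else if j.*2 == N then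
    ((acoord a j) +i* 0)%C
  else ((s * acoord a (N - j)) +i* (- (s * acoord a j)))%C.

Definition apoly (N : nat) (a : 'rV[R]_N.-1) : {poly R[i]} :=
  'X^N + \sum_(1 <= n < N) (ccoef a n)%:P * 'X^(N - n) + 1.

Definition inW (N : nat) (a : 'rV[R]_N.-1) : Prop :=
  forall z : R[i], root (apoly a) z -> `|z| = 1.

Definition sqnorm (n : nat) (a : 'rV[R]_n) : R := \sum_(i < n) a 0 i ^+ 2.

End Defs.

From HB Require Import structures.
From mathcomp Require Import all_boot all_order all_algebra.
From mathcomp Require Import reals.
From mathcomp Require Import complex.
From mathcomp Require Import zify ring.
Set Implicit Arguments. Unset Strict Implicit. Unset Printing Implicit Defensive.
Import Order.TTheory GRing.Theory Num.Theory.
Local Open Scope ring_scope.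

(* Factor a(x) = \prod_k (x - z_k) over its roots, which lie on the unit circle.
   By Vieta, the coefficient c_n of x^(N-n) is bounded by 'C(N, n) in modulus,
   and the coordinates of a are arranged so that 2|c_n|^2 = a_n^2 + a_(N-n)^2;
   hence ||a||^2 = \sum_n |c_n|^2 <= \sum_(0<n<N) 'C(N, n)^2 = 'C(2N, N) - 2.
   Equality forces |c_1| = |z_1 + ... + z_N| = N, which for unimodular z_k
   means all roots coincide: a(x) = (x + zeta)^N, and the constant term 1
   gives zeta^N = 1. *)

Lemma card_sets_of_size (m n : nat) :
  #|[pred I : {set 'I_m} | #|I| == n]| = 'C(m, n).
Proof. by rewrite -[in RHS](card_ord m) -card_draws; apply: eq_card => I; rewrite !inE. Qed.

Lemma norm_coef_prod_XsubC_le (C : numDomainType) (rs : seq C) (n : nat) :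
  {in rs, forall z, `|z| <= 1} -> (n <= size rs)%N ->
  `|(\prod_(z <- rs) ('X - z%:P))`_(size rs - n)| <= 'C(size rs, n)%:R.
Proof.
move=> rs_le1 n_le; rewrite coef_prod_XsubC ?leq_subr // subKn //.
rewrite normrM normrX normrN1 expr1n mul1r.
apply: le_trans (ler_norm_sum _ _ _) _.
rewrite -card_sets_of_size -sumr_const.
apply: ler_sum => I _; rewrite normr_prod prodr_ile1 // => i _.
by rewrite normr_ge0 rs_le1 ?mem_nth.
Qed.

Lemma coef_XaddC_exp (C : comNzRingType) (c : C) (m n : nat) : (n <= m)%N ->
  (('X + c%:P) ^+ m)`_(m - n) = c ^+ n *+ 'C(m, n).
Proof.
move=> n_le.
have -> : ('X + c%:P) ^+ m = \prod_(z <- nseq m (- c)) ('X - z%:P).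
  by rewrite big_nseq iter_mulr_1 polyCN opprK.
rewrite coef_prod_XsubC size_nseq ?leq_subr // subKn //.
rewrite (eq_bigr (fun=> (- c) ^+ n)); last first.
  move=> I /eqP <-; rewrite -prodr_const; apply: eq_bigr => i _.
  by rewrite nth_nseq ltn_ord.
by rewrite sumr_const card_sets_of_size mulrnAr -exprMn mulN1r opprK.
Qed.

Lemma normC_sum_seq_eq1 (C : numClosedFieldType) (rs : seq C) :
  {in rs, forall z, `|z| = 1} -> `|\sum_(z <- rs) z| = (size rs)%:R ->
  exists t, {in rs, forall z, z = t}.
Proof.
move=> rs1 norm_sum.
have rsi1 (i : 'I_(size rs)) : `|rs`_i| = 1 by rewrite rs1 ?mem_nth.
have [|t _ rs_t] := @normC_sum_eq1 _ _ predT (fun i : 'I_(size rs) => rs`_i) _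
  (fun i _ => rsi1 i).
  by rewrite [RHS](eq_bigr (fun=> 1)) // sumr_const card_ord -norm_sum (big_nth 0) big_mkord.
by exists t => z /(nthP 0)[i i_lt <-]; exact: (rs_t (Ordinal i_lt)).
Qed.

Lemma ler_sum_nat_eq (C : numDomainType) (m n : nat) (F G : nat -> C) :
  (forall i, (m <= i < n)%N -> F i <= G i) ->
  \sum_(m <= i < n) F i = \sum_(m <= i < n) G i ->
  forall i, (m <= i < n)%N -> F i = G i.
Proof.
move=> FG sumFG i i_mn; apply/eqP; rewrite eq_sym -subr_eq0.
have /eqP : \sum_(m <= j < n) (G j - F j) = 0 by rewrite sumrB sumFG subrr.
rewrite big_seq psumr_eq0 => [/allP/(_ i)|j]; rewrite mem_index_iota.
  by move=> /(_ i_mn); rewrite i_mn.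
by move=> /FG; rewrite subr_ge0.
Qed.

Lemma sum_binomial_sq (N : nat) : (\sum_(n < N.+1) 'C(N, n) ^ 2)%N = 'C(N.*2, N).
Proof.
rewrite -addnn -binomial.Vandermonde; apply: eq_bigr => n _.
by rewrite bin_sub ?mulnn // -ltnS.
Qed.

Lemma sum_binomial_sq_interior (C : pzRingType) (N : nat) : (0 < N)%N ->
  \sum_(1 <= n < N) ('C(N, n)%:R : C) ^+ 2 = 'C(N.*2, N)%:R - 2.
Proof.
move=> N_gt0; rewrite -sum_binomial_sq -(big_mkord xpredT (fun n => ('C(N, n) ^ 2)%N)).
rewrite big_ltn // big_nat_recr //= bin0 binn !exp1n.
by rewrite addnCA natrD addrK natr_sum; apply: eq_bigr => n _; rewrite natrX.
Qed.

Section APoly.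
Variables (R : realType) (N : nat) (w : 'rV[R]_N.-1).

Lemma sqr_norm_ccoef n :
  `|ccoef w n| ^+ 2 = ((acoord w n ^+ 2 + acoord w (N - n) ^+ 2) / 2)%:C%C.
Proof.
rewrite normc_def -rmorphXn sqr_sqrtr ?addr_ge0 ?sqr_ge0 //; congr (_%:C%C).
rewrite /ccoef; case: ifP => _ /=; first by rewrite !exprMn sqr_sqrtr ?ler0n //; field.
case: ifP => [/eqP n2_eqN|_] /=; last by rewrite sqrrN !exprMn sqr_sqrtr ?ler0n //; field.
have -> : (N - n = n)%N by lia.
by rewrite expr0n addr0; field.
Qed.

Lemma sqnorm_ccoef : (sqnorm w)%:C%C = \sum_(1 <= n < N) `|ccoef w n| ^+ 2.
Proof.
under eq_bigr do rewrite sqr_norm_ccoef.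
rewrite -rmorph_sum; congr (_%:C%C).
have sqnormE : sqnorm w = \sum_(1 <= n < N) acoord w n ^+ 2.
  by rewrite big_add1 big_mkord; apply: eq_bigr => i _; rewrite /acoord valK.
have sqnorm_rev : \sum_(1 <= n < N) acoord w (N - n) ^+ 2 = sqnorm w.
  rewrite sqnormE big_nat_rev; apply: eq_big_nat => n /andP[n_ge1 n_ltN].
  by congr (acoord w _ ^+ 2); lia.
by rewrite -mulr_suml big_split /= sqnorm_rev -sqnormE; field.
Qed.

Hypothesis N_gt0 : (0 < N)%N.

Lemma apolyE :
  apoly w = 'X^N + \poly_(j < N) (if j == 0%N then 1 else ccoef w (N - j)).
Proof.
pose b j := if j == 0%N then 1 else ccoef w (N - j).
rewrite -[\poly_(j < N) _]/(\poly_(j < N) b j) poly_def.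
rewrite -(big_mkord xpredT (fun j => b j *: 'X^j)) big_ltn //.
rewrite /apoly -addrA /b eqxx scale1r [_ + 1]addrC; congr (_ + (_ + _)).
rewrite big_nat_rev; apply: eq_big_nat => n /andP[n_ge1 n_ltN].
rewrite -mul_polyC ifF; last by lia.
by congr ((ccoef w _)%:P * 'X^_); lia.
Qed.

Lemma size_apoly : size (apoly w) = N.+1.
Proof. by rewrite apolyE size_polyDl size_polyXn // ltnS size_poly. Qed.

Lemma apoly_monic : apoly w \is monic.
Proof. by rewrite monicE apolyE lead_coefDl ?lead_coefXn // size_polyXn ltnS size_poly. Qed.

Lemma coef_apoly n : (1 <= n < N)%N -> (apoly w)`_(N - n) = ccoef w n.
Proof.
move=> /andP[n_ge1 n_ltN].
rewrite apolyE coefD coefXn coef_poly.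
have [-> -> ->] : [/\ (N - n == N)%N = false, (N - n < N)%N & (N - n == 0)%N = false].
  by split; lia.
by rewrite add0r subKn // ltnW.
Qed.

Lemma coef0_apoly : (apoly w)`_0 = 1.
Proof. by rewrite apolyE coefD coefXn coef_poly N_gt0 eqxx eq_sym gtn_eqF // add0r. Qed.

Lemma apoly_prod_roots : inW w ->
  exists rs : seq R[i], [/\ apoly w = \prod_(z <- rs) ('X - z%:P),
    size rs = N & {in rs, forall z, `|z| = 1}].
Proof.
move=> hw; have [rs apoly_rs] := closed_field_poly_normal (apoly w).
rewrite (monicP apoly_monic) scale1r in apoly_rs.
exists rs; split=> //.
  by have := size_apoly; rewrite apoly_rs size_prod_XsubC => -[].
by move=> z z_rs; apply: hw; rewrite apoly_rs root_prod_XsubC.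
Qed.

Lemma norm_ccoef_le n : inW w -> (1 <= n < N)%N -> `|ccoef w n| <= 'C(N, n)%:R.
Proof.
move=> hw n_mid; have [rs [apoly_rs size_rs rs1]] := apoly_prod_roots hw.
rewrite -coef_apoly // apoly_rs -size_rs norm_coef_prod_XsubC_le ?size_rs //.
  by move=> z /rs1 ->.
by case/andP: n_mid => _ /ltnW.
Qed.

Lemma apoly_XaddC_exp_of_norm_ccoef1 : (1 < N)%N -> inW w -> `|ccoef w 1| = N%:R ->
  exists zeta, zeta ^+ N = 1 /\ apoly w = ('X + zeta%:P) ^+ N.
Proof.
move=> N_gt1 hw norm_c1; have [rs [apoly_rs size_rs rs1]] := apoly_prod_roots hw.
have [t rs_t] : exists t, {in rs, forall z, z = t}.
  apply: normC_sum_seq_eq1 => //.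
  rewrite -normrN -coefPn_prod_XsubC ?size_rs -?lt0n // -apoly_rs -subn1.
  by rewrite coef_apoly ?N_gt1.
have apoly_t : apoly w = ('X + (- t)%:P) ^+ N.
  rewrite apoly_rs (eq_big_seq (fun=> 'X - t%:P)) => [|z /rs_t -> //].
  by rewrite big_const_seq count_predT iter_mulr_1 size_rs polyCN.
exists (- t); split=> //.
by rewrite -coef0_apoly apoly_t -[0%N](subnn N) coef_XaddC_exp // binn.
Qed.

Lemma norm_ccoef_XaddC_exp zeta n : `|zeta| = 1 ->
  apoly w = ('X + zeta%:P) ^+ N -> (1 <= n < N)%N -> `|ccoef w n| = 'C(N, n)%:R.
Proof.
move=> zeta1 apoly_zeta /andP[n_ge1 n_ltN].
rewrite -coef_apoly ?n_ge1 // apoly_zeta coef_XaddC_exp; last exact: ltnW.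
by rewrite normrMn normrX zeta1 expr1n.
Qed.

End APoly.

Theorem mainTheorem6 (R : realType) (N : nat) (hN : (2 <= N)%N)
    (w : 'rV[R]_N.-1) (hw : inW w) :
  sqnorm w <= ('C(N.*2, N))%:R - 2 /\
  (sqnorm w = ('C(N.*2, N))%:R - 2 <->
     exists zeta : R[i], zeta ^+ N = 1 /\ apoly w = ('X + zeta%:P) ^+ N).
Proof.
have N_gt0 : (0 < N)%N by apply: leq_trans hN.
have boundE : (('C(N.*2, N))%:R - 2 : R)%:C%C = \sum_(1 <= n < N) 'C(N, n)%:R ^+ 2.
  by rewrite sum_binomial_sq_interior // rmorphB /= !rmorph_nat.
have sqr_norm_ccoef_le n : (1 <= n < N)%N -> `|ccoef w n| ^+ 2 <= 'C(N, n)%:R ^+ 2.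
  by move=> n_mid; rewrite lerXn2r ?nnegrE ?ler0n ?norm_ccoef_le.
have eqC (x y : R) : x%:C%C = y%:C%C <-> x = y by split=> [[]|->].
split; first by rewrite -lecR sqnorm_ccoef boundE; exact: ler_sum_nat.
split=> [/eqC | [zeta [zetaN apoly_zeta]]].
  rewrite sqnorm_ccoef boundE => /(ler_sum_nat_eq sqr_norm_ccoef_le)/(_ 1%N).
  rewrite hN bin1 => /(_ isT)/eqP; rewrite eqrXn2 ?normr_ge0 ?ler0n // => /eqP.
  exact: apoly_XaddC_exp_of_norm_ccoef1.
have zeta1 : `|zeta| = 1.
  by apply/eqP; rewrite -(pexpr_eq1 N_gt0) ?normr_ge0 // -normrX zetaN normr1.
apply/eqC; rewrite sqnorm_ccoef boundE; apply: eq_big_nat => n n_mid.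
by rewrite (norm_ccoef_XaddC_exp N_gt0 zeta1 apoly_zeta).
Qed.
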